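(* Let $G=H\oplus_3 K$ be a $3$-sum of $2$-connected cubic graphs $H$ and $K$ such that $\pi(G)=4$. If $\pi(H)\ge 5$ or $\pi(K)\ge 5$, then, with respect to every perfect-matching $4$-cover of $G$, each edge of the principal $3$-edge-cut is doubly covered.
   Context: Graphs are finite; loops and multiple edges are allowed. For a bridgeless cubic graph $G$, the perfect matching index $\pi(G)$ is the smallest number of perfect matchings whose union is $E(G)$; a perfect-matching $4$-cover is a set of four perfect matchings whose union is $E(G)$, and an edge is doubly covered if it belongs to exactly two of them. A $3$-sum $H\oplus_3 K$ with distinguished vertices $u\in V(H)$, $v\in V(K)$ is obtained by deleting $u$ and $v$ and joining the three dangling edge-ends formerly incident with $u$ bijectively to the three dangling edge-ends formerly incident with $v$; the three new edges form the principal $3$-edge-cut. *)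

From HB Require Import structures.
From mathcomp Require Import all_boot.
Set Implicit Arguments. Unset Strict Implicit. Unset Printing Implicit Defensive.

(* A finite multigraph: a vertex set and an edge set inside finite carrier
   types, and an endpoint map.  A loop is an edge e with ends e = (x, x). *)
Record mgraph := MGraph {
  gV : finType;
  gE : finType;
  vset : {set gV};
  eset : {set gE};
  ends : gE -> gV * gV }.

Section Graphs.
Variable G : mgraph.

Definition wf_graph : Prop :=
  forall e, e \in eset G -> ((@ends G e).1 \in vset G) /\ ((@ends G e).2 \in vset G).

Definition incident (x : gV G) (e : gE G) : bool :=
  ((@ends G e).1 == x) || ((@ends G e).2 == x).

Definition is_loop (e : gE G) : bool := (@ends G e).1 == (@ends G e).2.

(* degree: a loop contributes 2 *)
Definition degree (x : gV G) : nat :=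
  #|[set e in eset G | (@ends G e).1 == x]| + #|[set e in eset G | (@ends G e).2 == x]|.

Definition cubic : Prop := forall x, x \in vset G -> degree x = 3.

Definition adj (S : {set gE G}) : rel (gV G) :=
  fun x y => [exists e in S, (@ends G e == (x, y)) || (@ends G e == (y, x))].

Definition connected_by (S : {set gE G}) : Prop :=
  forall x y, x \in vset G -> y \in vset G -> connect (adj S) x y.

Definition connected_graph : Prop := connected_by (eset G).

Definition bridgeless : Prop :=
  forall e, e \in eset G -> connected_by (eset G :\ e).

(* 2-connected (for cubic graphs: connected and bridgeless) *)
Definition two_connected : Prop := connected_graph /\ bridgeless.

Definition perfect_matching (M : {set gE G}) : Prop :=
  M \subset eset G /\ (forall e, e \in M -> ~~ is_loop e) /\
  (forall x, x \in vset G -> #|[set e in M | incident x e]| = 1).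

Definition pm_cover (k : nat) (M : 'I_k -> {set gE G}) : Prop :=
  (forall i, perfect_matching (M i)) /\ (\bigcup_(i < k) M i = eset G).

Definition pmi_le (k : nat) : Prop :=
  exists j, exists M : 'I_j -> {set gE G}, j <= k /\ pm_cover M.

Definition pmi_eq (k : nat) : Prop := pmi_le k /\ ~ pmi_le k.-1.

Definition doubly_covered (k : nat) (M : 'I_k -> {set gE G}) (e : gE G) : bool :=
  #|[set i | e \in M i]| == 2.
End Graphs.

Definition other_end (G : mgraph) (w : gV G) (e : gE G) : gV G :=
  if (@ends G e).1 == w then (@ends G e).2 else (@ends G e).1.

Definition sum3_bij (H K : mgraph) (u : gV H) (v : gV K) (f : gE H -> gE K) : Prop :=
  (forall a, a \in eset H -> incident u a -> (f a \in eset K) && incident v (f a)) /\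
  (forall a1 a2, a1 \in eset H -> incident u a1 -> a2 \in eset H -> incident u a2 ->
      f a1 = f a2 -> a1 = a2) /\
  (forall b, b \in eset K -> incident v b ->
      exists2 a, (a \in eset H) && incident u a & f a = b).

(* The 3-sum H (+)_3 K: vertices V(H)-u and V(K)-v; edges of H not at u,
   edges of K not at v, and for each edge a of H at u a new edge (still
   labelled inl a) joining the other end of a to the other end of f a. *)
Definition sum3 (H K : mgraph) (u : gV H) (v : gV K) (f : gE H -> gE K) : mgraph :=
  @MGraph (gV H + gV K)%type (gE H + gE K)%type
    [set x | match x with
             | inl a => (a \in vset H) && (a != u)
             | inr b => (b \in vset K) && (b != v) end]
    [set e | match e with
             | inl a => a \in eset H
             | inr b => (b \in eset K) && ~~ incident v b end]
    (fun e => match e with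
     | inl a => if incident u a then (inl (other_end u a), inr (other_end v (f a)))
                else (inl (@ends H a).1, inl (@ends H a).2)
     | inr b => (inr (@ends K b).1, inr (@ends K b).2) end).

Definition principal_cut (H K : mgraph) (u : gV H) (v : gV K) (f : gE H -> gE K)
  : {set gE (sum3 u v f)} :=
  [set e : (gE H + gE K)%type | match e with
                  | inl a => (a \in eset H) && incident u a
                  | inr _ => false end].

(* Every perfect matching N of G = H (+)_3 K meets the principal cut C in an
   odd number of edges: contracting either shore of C turns N into a set of
   edges of H (or K) that covers every vertex once except the contracted one,
   which it covers |C :&: N| times, and a cubic graph has an even number of
   vertices.  If every member of a perfect-matching 4-cover of G met C exactly
   once, the contractions would give perfect-matching 4-covers of both H and K.
   So some member contains all of C, and the multiplicities of the three cut
   edges add up to at least 3 + 1 + 1 + 1 = 6.  On the other hand, the end in H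
   of a cut edge has three edges whose multiplicities are positive and add up
   to 4, so no cut edge is covered more than twice. *)

From mathcomp Require Import all_boot zify.
Set Implicit Arguments. Unset Strict Implicit. Unset Printing Implicit Defensive.

Lemma sum_saturated (T : finType) (A : {set T}) (F : T -> nat) m :
  {in A, forall y, F y <= m} -> m * #|A| <= \sum_(y in A) F y ->
  {in A, forall y, F y = m}.
Proof.
move=> Fm sumA.
have /leqif_sum Fsum : forall y, y \in A -> F y <= m ?= iff (F y == m).
  by move=> y yA; apply/leqifP; rewrite ltn_neqAle Fm // andbT; case: eqP.
have /eqP : \sum_(y in A) F y = \sum_(y in A) m.
  by apply/eqP; rewrite eqn_leq Fsum sum_nat_const mulnC sumA.
by rewrite Fsum => /forall_inP Fy y /Fy /eqP.
Qed.

Lemma sum_pos_lb (T : finType) (A : {set T}) (F : T -> nat) x :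
  x \in A -> {in A, forall y, 0 < F y} -> F x + (#|A| - 1) <= \sum_(y in A) F y.
Proof.
move=> xA Fpos; rewrite (big_setD1 x xA) (cardsD1 x A) xA add1n subn1 leq_add2l /=.
by rewrite -sum1_card; apply: leq_sum => y /setD1P[_ /Fpos].
Qed.

Definition multiplicity (T : finType) k (M : 'I_k -> {set T}) (x : T) : nat :=
  #|[set i | x \in M i]|.

Lemma sum_multiplicity (T : finType) k (M : 'I_k -> {set T}) (A : {set T}) :
  \sum_(x in A) multiplicity M x = \sum_(i < k) #|A :&: M i|.
Proof.
rewrite /multiplicity; under eq_bigr do rewrite -sum1dep_card.
under [RHS]eq_bigr do rewrite -sum1_card.
rewrite (exchange_big_dep predT) //=; apply: eq_bigr => i _.
by apply: eq_bigl => x; rewrite inE.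
Qed.

Section OtherEnd.
Variable G : mgraph.
Implicit Types (x y : gV G) (e : gE G).

Lemma incident_other_end x e : incident x e -> incident (other_end x e) e.
Proof. by rewrite /incident /other_end; case: ifP => _; rewrite eqxx ?orbT. Qed.

Lemma other_end_neq x e : incident x e -> ~~ is_loop e -> other_end x e != x.
Proof.
rewrite /incident /is_loop /other_end; case: ifP => [/eqP -> _|-> //].
by rewrite eq_sym.
Qed.

Lemma other_end_vset x e :
  wf_graph G -> e \in eset G -> other_end x e \in vset G.
Proof. by move=> wf /wf[e1 e2]; rewrite /other_end; case: ifP. Qed.

Lemma eq_other_end x y e :
  incident x e -> y != x -> (other_end x e == y) = incident y e.
Proof.
rewrite /incident /other_end.
case: ifP => [/eqP -> _|_ /= /eqP ->] /negbTE yx; by rewrite (eq_sym x y) yx ?orbF.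
Qed.
End OtherEnd.

Section GraphFacts.
Variable G : mgraph.
Implicit Types (x y : gV G) (e : gE G) (A S : {set gE G}).

Definition edges_at x : {set gE G} := [set e in eset G | incident x e].

Lemma edges_at_sub x : {subset edges_at x <= eset G}.
Proof. by move=> e /setIdP[]. Qed.

Definition loops_at x : {set gE G} := [set e in edges_at x | is_loop e].

Definition loopless : Prop := forall e, e \in eset G -> ~~ is_loop e.

Lemma degree_edges_at x : degree x = #|edges_at x| + #|loops_at x|.
Proof.
rewrite /degree -cardsUI; congr (_ + _); apply: eq_card => e.
  by rewrite !inE andb_orr.
rewrite !inE /incident /is_loop; case: (e \in eset G) => //=.
case: (eqVneq (ends e).1 x) => [->|/negbTE e1x]; case: (eqVneq (ends e).2 x) => //= ->.
by rewrite e1x.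
Qed.

Lemma connect_adj_loops S x y :
  (forall e, e \in S -> incident x e -> is_loop e) -> connect (adj S) x y -> y = x.
Proof.
move=> loopsS; suff /closed_connect xy : closed (adj S) (pred1 x).
  by move/xy; rewrite !inE eqxx => /esym/eqP.
suff to_x z z' : adj S z z' -> z == x -> z' == x.
  move=> z z' zz' /=; apply/idP/idP; first exact: to_x.
  apply: to_x; move: zz' => /existsP[e /andP[eS ee]].
  by apply/existsP; exists e; rewrite eS orbC.
move=> /existsP[e /andP[eS /orP[]/eqP ee]] /eqP zx; subst z;
  have xe : incident x e by rewrite /incident ee eqxx ?orbT.
all: by have := loopsS e eS xe; rewrite /is_loop ee // eq_sym.
Qed.

Lemma cubic_bridgeless_loopless : wf_graph G -> cubic G -> bridgeless G -> loopless.
Proof.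
move=> wf cub br a aE; apply/negP => la.
set x := (ends a).1.
have xV : x \in vset G by have [] := wf a aE.
have aL : a \in loops_at x by rewrite !inE aE /incident eqxx la.
have LE : loops_at x \subset edges_at x by apply/subsetP => e; rewrite inE => /andP[].
have one_nonloop : #|edges_at x :\: loops_at x| = 1.
  have L_gt0 : 0 < #|loops_at x| by apply/card_gt0P; exists a.
  have := cub x xV; rewrite degree_edges_at -(cardsID (loops_at x) (edges_at x)).
  by rewrite (setIidPr LE); lia.
have /eqP/cards1P[b Db] := one_nonloop.
have /setDP[bx bL] : b \in edges_at x :\: loops_at x by rewrite Db set11.
have /andP[bE xb] : (b \in eset G) && incident x b by rewrite inE in bx.
have nlb : ~~ is_loop b by rewrite inE bx in bL.
apply: (negP (other_end_neq xb nlb)); apply/eqP.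
apply: (connect_adj_loops _ (br b bE _ _ xV (other_end_vset x wf bE))).
move=> e /setD1P[eb eE] xe; apply/negPn/negP => nle.
have : e \in edges_at x :\: loops_at x by rewrite !inE eE xe nle.
by rewrite Db inE (negbTE eb).
Qed.

Lemma card_edges_at x : cubic G -> loopless -> x \in vset G -> #|edges_at x| = 3.
Proof.
move=> cub nl xV; rewrite -(cub x xV) degree_edges_at.
suff -> : loops_at x = set0 by rewrite cards0 addn0.
apply/setP => e; rewrite !inE.
by case: (boolP (e \in eset G)) => //= /nl /negbTE ->; rewrite andbF.
Qed.

Lemma card_ends e : wf_graph G -> e \in eset G -> ~~ is_loop e ->
  #|[set x in vset G | incident x e]| = 2.
Proof.
move=> wf eE nle; have [e1V e2V] := wf e eE.
suff -> : [set x in vset G | incident x e] = [set (ends e).1; (ends e).2].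
  by rewrite cards2 nle.
apply/setP => x; rewrite !inE /incident !(eq_sym x).
have [<-|_] := eqVneq (ends e).1 x; first by rewrite e1V.
by have [<-|_] := eqVneq (ends e).2 x; rewrite ?e2V ?andbF.
Qed.

Lemma sum_card_incident A : wf_graph G -> loopless -> A \subset eset G ->
  \sum_(x in vset G) #|[set e in A | incident x e]| = 2 * #|A|.
Proof.
move=> wf nl /subsetP AE; under eq_bigr do rewrite -sum1dep_card.
rewrite (exchange_big_dep (mem A)) /=; last by move=> x e _ /andP[].
rewrite mulnC -sum_nat_const; apply: eq_bigr => e eA.
rewrite sum1dep_card -(card_ends wf (AE e eA) (nl e (AE e eA))).
by apply: eq_card => x; rewrite !inE eA.
Qed.

Lemma odd_degree_near_matching A z : wf_graph G -> cubic G -> loopless ->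
  A \subset eset G -> z \in vset G ->
  {in vset G, forall x, x != z -> #|[set e in A | incident x e]| = 1} ->
  odd #|[set e in A | incident z e]|.
Proof.
move=> wf cub nl AE zV Adeg.
have handshakeE : 3 * #|vset G| = 2 * #|eset G|.
  rewrite -(sum_card_incident wf nl (subxx _)) mulnC -sum_nat_const.
  by apply: eq_bigr => x xV; rewrite -(card_edges_at cub nl xV).
(* deg z + (|V| - 1) = 2 |A| by the degree sum, and |V| is even. *)
have := sum_card_incident wf nl AE.
rewrite (big_setD1 z zV) /= (eq_bigr (fun=> 1)); last first.
  by move=> x /setD1P[xz /Adeg]; apply.
by move: handshakeE; rewrite sum1_card (cardsD1 z (vset G)) zV; lia.
Qed.

Lemma pm_cover_multiplicity_gt0 k (M : 'I_k -> {set gE G}) e :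
  pm_cover M -> e \in eset G -> 0 < multiplicity M e.
Proof. by move=> [_ <-] /bigcupP[i _ ei]; apply/card_gt0P; exists i; rewrite inE. Qed.

Lemma pm_cover_sum_multiplicity k (M : 'I_k -> {set gE G}) x :
  pm_cover M -> x \in vset G -> \sum_(e in edges_at x) multiplicity M e = k.
Proof.
move=> [Mpm _] xV; rewrite sum_multiplicity -[RHS]card_ord -sum1_card.
apply: eq_bigr => i _; have [/subsetP ME [_ /(_ x xV) <-]] := Mpm i.
by apply: eq_card => e; rewrite !inE andbC; case: (boolP (e \in M i)) => // /ME ->.
Qed.

Lemma pm_cover_multiplicity_le k (M : 'I_k -> {set gE G}) x e :
  pm_cover M -> x \in vset G -> e \in edges_at x ->
  multiplicity M e + (#|edges_at x| - 1) <= k.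
Proof.
move=> cov xV ex.
have pos : {in edges_at x, forall e', 0 < multiplicity M e'}.
  by move=> e' /setIdP[e'E _]; apply: pm_cover_multiplicity_gt0.
by have := sum_pos_lb ex pos; rewrite (pm_cover_sum_multiplicity cov xV).
Qed.

End GraphFacts.

(* [X] arises from [G] by contracting one shore of the edge cut [C] into the
   vertex [z]; [phi] and [psi] identify the edges of [X] and its vertices other
   than [z] with those of [G]. *)
Definition cut_contraction (G X : mgraph) (C : {set gE G}) (z : gV X)
    (phi : gE X -> gE G) (psi : gV X -> gV G) : Prop :=
  [/\ {in eset X &, injective phi},
      {in eset X, forall a, phi a \in eset G},
      phi @: edges_at z = C &
      {in vset X, forall x, x != z ->
         psi x \in vset G /\ phi @: edges_at x = edges_at (psi x)}].

Section CutContraction.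
Variables (G X : mgraph) (C : {set gE G}) (z : gV X).
Variables (phi : gE X -> gE G) (psi : gV X -> gV G).
Hypothesis contr : cut_contraction C z phi psi.
Hypotheses (wfX : wf_graph X) (cubicX : cubic X) (nlX : loopless X).
Hypothesis zV : z \in vset X.

Lemma card_preimset_edges_at (N : {set gE G}) x :
  #|[set a in eset X :&: phi @^-1: N | incident x a]| = #|phi @: edges_at x :&: N|.
Proof.
have [inj _ _ _] := contr.
rewrite -(card_in_imset (sub_in2 _ inj)); last by move=> a /setIdP[/setIP[]].
apply: eq_card => e; apply/imsetP/setIP.
  move=> [a /setIdP[/setIP[aE aN] xa] ->]; split; last by rewrite inE in aN.
  by apply: imset_f; rewrite inE aE.
by move=> [/imsetP[a /setIdP[aE xa] ->] eN]; exists a; rewrite // !inE aE eN.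
Qed.

Lemma pm_preimset_degree (N : {set gE G}) x :
  perfect_matching N -> x \in vset X ->
  #|[set a in eset X :&: phi @^-1: N | incident x a]|
    = if x == z then #|C :&: N| else 1.
Proof.
move=> [/subsetP NE [_ Ndeg]] xV; rewrite card_preimset_edges_at.
case: eqP => [->|/eqP xz]; first by have [_ _ -> _] := contr.
have [_ _ _ /(_ x xV xz)[psiV ->]] := contr; rewrite -(Ndeg _ psiV).
by apply: eq_card => e; rewrite !inE andbC; case: (boolP (e \in N)) => // /NE ->.
Qed.

Lemma odd_card_cut_pm (N : {set gE G}) : perfect_matching N -> odd #|C :&: N|.
Proof.
move=> Npm.
have := odd_degree_near_matching wfX cubicX nlX (subsetIl _ (phi @^-1: N)) zV.
rewrite (pm_preimset_degree Npm zV) eqxx; apply=> x xV xz.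
by rewrite (pm_preimset_degree Npm xV) (negbTE xz).
Qed.

Lemma card_cut : #|C| = 3.
Proof.
have [inj _ <- _] := contr.
by rewrite card_in_imset ?card_edges_at //; apply: sub_in2 inj; apply: edges_at_sub.
Qed.

Lemma pmi_le_cut_contraction k (M : 'I_k -> {set gE G}) :
  pm_cover M -> (forall i, #|C :&: M i| = 1) -> pmi_le X k.
Proof.
move=> [Mpm Mcov] c1; exists k, (fun i => eset X :&: phi @^-1: M i); split => //; split.
  move=> i; split; first exact: subsetIl.
  split; first by move=> a /setIP[/nlX].
  by move=> x xV; rewrite (pm_preimset_degree (Mpm i) xV) c1; case: eqP.
apply/setP => a; apply/bigcupP/idP => [[i _ /setIP[]] // | aE].
have [_ phiE _ _] := contr; have := phiE a aE; rewrite -Mcov.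
by move=> /bigcupP[i _ ai]; exists i; rewrite // !inE aE.
Qed.

Lemma cut_multiplicity_le k (M : 'I_k -> {set gE G}) e :
  pm_cover M -> e \in C -> multiplicity M e + 2 <= k.
Proof.
move=> cov; have [inj _ <- vert] := contr.
move=> /imsetP[a /setIdP[aE za] ->].
have wV : other_end z a \in vset X by apply: other_end_vset.
have [psiV Ew] := vert _ wV (other_end_neq za (nlX aE)).
have aw : phi a \in edges_at (psi (other_end z a)).
  by rewrite -Ew imset_f // inE aE incident_other_end.
have := pm_cover_multiplicity_le cov psiV aw.
rewrite -Ew card_in_imset ?card_edges_at //; apply: sub_in2 inj; apply: edges_at_sub.
Qed.

End CutContraction.

Section ThreeSum.
Variables (H K : mgraph) (u : gV H) (v : gV K) (f : gE H -> gE K).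
Local Notation G := (sum3 u v f).

Lemma sum3_incident_inl_inl x a : x != u -> @incident G (inl x) (inl a) = incident x a.
Proof.
rewrite {1}/incident /=; case: ifP => ua xu; last by [].
by rewrite orbF -(eq_other_end ua xu).
Qed.

Lemma sum3_incident_inr_inl y a :
  @incident G (inr y) (inl a) = incident u a && (other_end v (f a) == y).
Proof. by rewrite {1}/incident /=; case: ifP. Qed.

Lemma principal_cut_inl a : (inl a \in principal_cut u v f) = (a \in edges_at u).
Proof. by rewrite !inE. Qed.

Lemma principal_cut_inr b : (inr b \in principal_cut u v f) = false.
Proof. by rewrite inE. Qed.

Lemma sum3_contraction_left : cut_contraction (principal_cut u v f) u inl inl.
Proof.
split.
- by move=> a1 a2 _ _ [].
- by move=> a aE; rewrite inE.
- apply/setP => e; apply/imsetP/idP => [[a au ->] | ]; first by rewrite principal_cut_inl.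
  by case: e => [a|b]; rewrite ?principal_cut_inl ?principal_cut_inr // => au; exists a.
move=> x xV xu; split; first by rewrite inE xV xu.
apply/setP => e; apply/imsetP/idP => [[a /setIdP[aE xa] ->] | ].
  by rewrite !inE aE sum3_incident_inl_inl.
case: e => [a|b]; rewrite !inE ?andbF // sum3_incident_inl_inl //.
by move=> aEx; exists a; rewrite // inE.
Qed.

Hypothesis fbij : sum3_bij u v f.

Lemma f_edges_at a : a \in edges_at u -> f a \in edges_at v.
Proof. by case: fbij => fm _ /setIdP[aE ua]; rewrite inE fm. Qed.

(* Cut edges of the 3-sum are labelled by the edges of [H] at [u], so an edge
   of [K] at [v] is sent to the label of its [f]-preimage. *)
Definition sum3_lift (b : gE K) : gE G :=
  if [pick a in edges_at u | f a == b] is Some a then inl a else inr b.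

Variant sum3_lift_spec (b : gE K) : gE G -> Prop :=
  | Sum3LiftCut a of a \in edges_at u & b = f a : sum3_lift_spec b (inl a)
  | Sum3LiftOff of ~~ incident v b : sum3_lift_spec b (inr b).

Lemma sum3_lift_cut a : a \in edges_at u -> sum3_lift (f a) = inl a.
Proof.
move=> au; rewrite /sum3_lift; case: pickP => [a' /andP[a'u /eqP fa'] | /(_ a)].
  have [_ [finj _]] := fbij; move: au a'u => /setIdP[aE ua] /setIdP[a'E ua'].
  by rewrite (finj _ _ a'E ua' aE ua fa').
by rewrite au eqxx.
Qed.

Lemma sum3_liftP b : b \in eset K -> sum3_lift_spec b (sum3_lift b).
Proof.
move=> bE; case: (boolP (incident v b)) => vb.
  have [_ [_ /(_ b bE vb)[a uEa <-]]] := fbij.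
  have au : a \in edges_at u by rewrite inE.
  by rewrite sum3_lift_cut //; constructor.
rewrite /sum3_lift; case: pickP => [a /andP[au /eqP fab] | _]; last by constructor.
by move: vb; rewrite -fab; move: (f_edges_at au) => /setIdP[_ ->].
Qed.

Lemma sum3_contraction_right : cut_contraction (principal_cut u v f) v sum3_lift inr.
Proof.
split.
- move=> b1 b2 b1E b2E.
  case: (sum3_liftP b1E) => [a1 _ -> | _]; case: (sum3_liftP b2E) => [a2 _ -> | _] //.
  + by move=> [->].
  + by move=> [->].
- move=> b bE; case: (sum3_liftP bE) => [a /setIdP[aE _] _ | vb]; rewrite inE //.
  by rewrite bE.
- apply/setP => e; apply/imsetP/idP => [[b /setIdP[bE vb] ->] | ].
    by case: (sum3_liftP bE) vb => [a au _ _ | /negbTE ->] //; rewrite principal_cut_inl.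
  case: e => [a|b]; rewrite ?principal_cut_inl ?principal_cut_inr // => au.
  by exists (f a); [apply: f_edges_at | rewrite sum3_lift_cut].
move=> y yV yv; split; first by rewrite inE yV yv.
apply/setP => e; apply/imsetP/idP => [[b /setIdP[bE yb] ->] | ].
  case: (sum3_liftP bE) => [a au fab | vb]; rewrite !inE ?bE ?vb //.
  move: au (f_edges_at au) => /setIdP[aE ua] /setIdP[_ vfa].
  by rewrite aE sum3_incident_inr_inl ua eq_other_end // -fab.
case: e => [a|b]; rewrite !inE ?sum3_incident_inr_inl.
  move=> /and3P[aE ua ya]; have au : a \in edges_at u by rewrite inE aE.
  move: (f_edges_at au) => /setIdP[faE vfa].
  by exists (f a); rewrite ?sum3_lift_cut // inE faE -(eq_other_end vfa).
move=> /andP[/andP[bE vb] yb]; exists b; first by rewrite inE bE.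
case: (sum3_liftP bE) => // a au fab.
by move: vb; rewrite fab; case/setIdP: (f_edges_at au) => _ ->.
Qed.

End ThreeSum.

Theorem lemma6p3 (H K : mgraph) (u : gV H) (v : gV K) (f : gE H -> gE K) :
  wf_graph H -> wf_graph K -> cubic H -> cubic K ->
  two_connected H -> two_connected K ->
  u \in vset H -> v \in vset K -> sum3_bij u v f ->
  pmi_eq (sum3 u v f) 4 ->
  (~ pmi_le H 4 \/ ~ pmi_le K 4) ->
  forall M : 'I_4 -> {set gE (sum3 u v f)}, pm_cover M ->
  forall e, e \in principal_cut u v f -> doubly_covered M e.
Proof.
move=> wfH wfK cubH cubK [_ brH] [_ brK] uV vV fbij _ not_pmi4 M cov.
have nlH := cubic_bridgeless_loopless wfH cubH brH.
have nlK := cubic_bridgeless_loopless wfK cubK brK.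
have cH := sum3_contraction_left u v f.
have cK := sum3_contraction_right fbij.
have [Mpm _] := cov.
have c_odd j := odd_card_cut_pm cH wfH cubH nlH uV (Mpm j).
case: (boolP [forall j, #|principal_cut u v f :&: M j| == 1]).
  move=> /forallP all1; have {}all1 j := eqP (all1 j).
  exfalso; case: not_pmi4; apply.
    exact: pmi_le_cut_contraction cH nlH _ _ cov all1.
  exact: pmi_le_cut_contraction cK nlK _ _ cov all1.
move=> /forallPn[i ci].
have sum_cut : 2 * #|principal_cut u v f|
               <= \sum_(e in principal_cut u v f) multiplicity M e.
  have c_pos : {in [set: 'I_4], forall j, 0 < #|principal_cut u v f :&: M j|}.
    by move=> j _; case: #|_| (c_odd j).
  rewrite sum_multiplicity (card_cut cH cubH nlH uV).
  rewrite -(eq_bigl _ _ (fun j => in_setT j)).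
  have := sum_pos_lb (in_setT i) c_pos.
  by move: ci (c_odd i); rewrite cardsT card_ord; lia.
move=> e eC; apply/eqP; apply: (sum_saturated _ sum_cut eC) => e' e'C.
by have := cut_multiplicity_le cH wfH cubH nlH cov e'C; lia.
Qed.
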